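(* Let $q,\hat q$ be exponential factors in distinct Galois orbits, with common part $q_c$ and fission exponent $f_{q,\hat q}$. Then the set of nonzero values among $\mathrm{slope}(\sigma^i(q)-\sigma^j(\hat q))$, $0\le i<\mathrm{ram}(q)$, $0\le j<\mathrm{ram}(\hat q)$, equals $\mathrm{Levels}(q_c)\sqcup\{f_{q,\hat q}\}$. Moreover, if $q,\hat q$ are compatible, then the function $(i,j)\mapsto\mathrm{slope}(\sigma^i(q)-\sigma^j(\hat q))$ on $\mathbb Z\times\mathbb Z$ is determined by $\mathrm{Levels}(q_c)$ and $f_{q,\hat q}$: if $q',\hat q'$ is another compatible pair in distinct orbits with $\mathrm{Levels}(q'_c)=\mathrm{Levels}(q_c)$ and $f_{q',\hat q'}=f_{q,\hat q}$, then $\mathrm{slope}(\sigma^i(q')-\sigma^j(\hat q'))=\mathrm{slope}(\sigma^i(q)-\sigma^j(\hat q))$ for all $i,j\in\mathbb Z$.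
   Context: Exponential factors: finite sums $q=\sum_ka_kx^k$, $a_k\in\mathbb C$, $k\in\mathbb Q_{>0}$; $E(q)$ = set of exponents with $a_k\ne0$; $\mathrm{slope}(q)=\max E(q)$ ($0$ if $q=0$); $\mathrm{ram}(q)$ = least $r\ge1$ with $q\in x^{1/r}\mathbb C[x^{1/r}]$. Galois operator $\sigma(\sum a_kx^k)=\sum a_ke^{-2\pi\sqrt{-1}k}x^k$; the Galois orbit (Stokes circle) $\langle q\rangle=\{\sigma^i(q)\}$ has $\mathrm{ram}(q)$ elements. Truncation $\tau_k(\sum a_{k'}x^{k'})=\sum_{k'\ge k}a_{k'}x^{k'}$. $\mathrm{Levels}(q)=\{\mathrm{slope}(q-\sigma^i(q)):i\in\mathbb Z\}\setminus\{0\}$. Common part and fission exponent: for $q,\hat q$ in distinct Galois orbits, if some $k\in E(q)$ satisfies $\langle\tau_k(q)\rangle=\langle\tau_k(\hat q)\rangle$, let $k$ be the smallest such and set $q_c=\tau_k(q)$, $\hat q_c=\tau_k(\hat q)$; otherwise $q_c=\hat q_c=0$. The fission exponent is $f_{q,\hat q}=\max(\mathrm{slope}(q-q_c),\mathrm{slope}(\hat q-\hat q_c))$. The pair is compatible if $q_c=\hat q_c$. *)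

From HB Require Import structures.
From mathcomp Require Import all_boot all_order all_algebra.
From mathcomp Require Import finmap.
From mathcomp Require Import complex.
From mathcomp Require Import boolp classical_sets reals trigo.

Set Implicit Arguments.
Unset Strict Implicit.
Unset Printing Implicit Defensive.

Import Order.TTheory GRing.Theory Num.Theory.
Local Open Scope ring_scope.
Local Open Scope classical_set_scope.

Section ExpFactors.
Variable R : realType.

(* An exponential factor q = sum_k a_k x^k is encoded by its finitely supported
   coefficient function k |-> a_k (k : rat, a_k : R[i] = C when R is the reals). *)
Definition expf := {fsfun rat -> R[i] with 0}.

Definition is_expfactor (q : expf) : Prop := forall k, k \in finsupp q -> 0 < k.

(* slope(q) = max E(q), and 0 if q = 0 (all exponents being positive) *)
Definition slope (q : expf) : rat := \big[Num.max/0]_(k <- finsupp q) k.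

Definition subf (q q' : expf) : expf :=
  [fsfun k in fsetU (finsupp q) (finsupp q') => q k - q' k | 0].

Definition zerof : expf := [fsfun for fun _ => 0].

Definition expi (t : R) : R[i] := Complex (cos t) (sin t).

Definition sigma (q : expf) : expf :=
  [fsfun k in finsupp q => expi (- (2 * pi * ratr k)) * q k | 0].
Definition sigma_inv (q : expf) : expf :=
  [fsfun k in finsupp q => expi (2 * pi * ratr k) * q k | 0].

Definition sigmaz (i : int) (q : expf) : expf :=
  match i with
  | Posz n => iter n sigma q
  | Negz n => iter n.+1 sigma_inv q
  end.

Definition galois_orbit (q : expf) : set expf := range (fun i : int => sigmaz i q).

(* r satisfies q in x^{1/r} C[x^{1/r}]: every exponent is a positive multiple of 1/r *)
Definition ramification_ok (q : expf) (r : nat) : bool :=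
  (0 < r)%N && all (fun k => (0 < k) && ((k * r%:R) \is a Num.int)) (finsupp q).

Definition ramification (q : expf) : nat :=
  match pselect (exists r, ramification_ok q r) with
  | left h => ex_minn h
  | right _ => 1%N
  end.

Definition tau (k : rat) (q : expf) : expf :=
  [fsfun k' in finsupp q => if k <= k' then q k' else 0 | 0].

Definition Levels (q : expf) : set rat :=
  [set s | exists i : int, s = slope (subf q (sigmaz i q)) /\ s != 0].

Definition common_k (q qh : expf) : option rat :=
  ohead (sort <=%R [seq k <- finsupp q | `[< galois_orbit (tau k q) = galois_orbit (tau k qh) >] ]).

Definition qc (q qh : expf) : expf :=
  if common_k q qh is Some k then tau k q else zerof.
Definition qhc (q qh : expf) : expf :=
  if common_k q qh is Some k then tau k qh else zerof.

Definition fission (q qh : expf) : rat :=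
  Num.max (slope (subf q (qc q qh))) (slope (subf qh (qhc q qh))).

Definition compatible (q qh : expf) : Prop := qc q qh = qhc q qh.

End ExpFactors.

(* Every operation involved acts coefficientwise: sigma^i multiplies the
   coefficient of x^k by omega k ^ i, where omega k = e^{-2 pi sqrt(-1) k} is
   a unit, and slope(p) is the largest exponent with a nonzero coefficient.

   The common parts qc, qhc of q, qh are their truncations at an exponent K,
   they are Galois conjugate (qhc = sigma^m qc), and K is minimal: below K the
   truncations of q and qh never lie in one orbit.  Hence (slope_dichotomy)
   slope(sigma^i q - sigma^j qh) equals slope(sigma^i qc - sigma^j qhc) when
   the latter is nonzero, and otherwise the fission exponent, because the
   remainders q - qc and qh - qhc cannot cancel at their top exponent.  The
   former slope is level qc (j + m - i), where level P n = slope(P - sigma^n P)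
   has Levels P as its set of nonzero values.  The nonzero levels of qc are
   >= K > fission, the level function is periodic modulo ram(q), and it is
   determined by Levels(qc); this gives both parts of the theorem. *)

From HB Require Import structures.
From mathcomp Require Import all_boot all_order all_algebra.
From mathcomp Require Import finmap complex.
From mathcomp Require Import boolp classical_sets reals trigo.
From mathcomp Require Import ring lra.

Set Implicit Arguments.
Unset Strict Implicit.
Unset Printing Implicit Defensive.

Import Order.TTheory GRing.Theory Num.Theory.
Local Open Scope ring_scope.
Local Open Scope classical_set_scope.

Lemma shift_representative (m n : int) (d : nat) : (0 < d)%N ->
  exists2 i : nat, (i < d)%N & exists t : int, m - i%:Z = n + t * d%:Z.
Proof.
move=> d_gt0; have d_neq0 : d%:Z != 0 by rewrite eqz_nat -lt0n.
have rem_ge0 := modz_ge0 (m - n) d_neq0.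
exists `|((m - n) %% d%:Z)%Z|%N.
  by rewrite -ltz_nat gez0_abs // ltz_pmod // ltz_nat.
exists ((m - n) %/ d%:Z)%Z; rewrite gez0_abs //.
have := divz_eq (m - n) d%:Z; lra.
Qed.

Section SlopesBetweenOrbits.
Variable R : realType.
Implicit Types (p q qh r rh P Q Qh : expf R) (k s K : rat).

Lemma subfE p q k : subf p q k = p k - q k.
Proof.
rewrite /subf fsfunE; case: ifP => // /negbT.
by rewrite inE negb_or !mem_finsupp !negbK => /andP[/eqP-> /eqP->]; rewrite subr0.
Qed.

Lemma zerofE k : zerof R k = 0.
Proof. by rewrite /zerof fsfunE. Qed.

Lemma tauE K p k : tau K p k = if K <= k then p k else 0.
Proof.
by rewrite /tau fsfunE; case: ifP => // /negbT; rewrite mem_finsupp negbK => /eqP->; case: ifP.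
Qed.

Lemma sigmaE p k : sigma p k = expi (- (2 * pi * ratr k)) * p k.
Proof.
rewrite /sigma fsfunE; case: ifP => // /negbT.
by rewrite mem_finsupp negbK => /eqP->; rewrite mulr0.
Qed.

Lemma sigma_invE p k : sigma_inv p k = expi (2 * pi * ratr k) * p k.
Proof.
rewrite /sigma_inv fsfunE; case: ifP => // /negbT.
by rewrite mem_finsupp negbK => /eqP->; rewrite mulr0.
Qed.

Lemma expiD (a b : R) : expi a * expi b = expi (a + b).
Proof. by rewrite /expi cosD sinD {1}/GRing.mul /= [sin a * _ + _]addrC. Qed.

Lemma expi0 : expi (0 : R) = 1.
Proof. by rewrite /expi cos0 sin0. Qed.

Lemma expiMn (a : R) n : expi a ^+ n = expi (a *+ n).
Proof.
elim: n => [|n IH]; first by rewrite expr0 mulr0n expi0.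
by rewrite exprS IH expiD mulrS.
Qed.

Lemma expi_neq0 (a : R) : expi a != 0.
Proof.
apply/negP => /eqP a0; have := expiD a (- a).
by rewrite a0 mul0r subrr expi0 => /eqP; rewrite eq_sym oner_eq0.
Qed.

Lemma expiN (a : R) : expi (- a) = (expi a)^-1.
Proof. by apply: (mulfI (expi_neq0 a)); rewrite expiD subrr expi0 mulfV ?expi_neq0. Qed.

Lemma expi_2pi_int (N : int) : expi ((pi *+ 2) * N%:~R : R) = 1.
Proof.
have expi_2pi_nat (n : nat) : expi (pi *+ 2 * n%:R : R) = 1.
  by rewrite mulr_natr -expiMn /expi cos2pi sin2pi expr1n.
case: N => n; first exact: expi_2pi_nat.
by rewrite NegzE mulrN expiN expi_2pi_nat invr1.
Qed.

Definition omega k : R[i] := expi (- (2 * pi * ratr k)).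

Lemma omega_unit k : omega k \is a GRing.unit.
Proof. by rewrite unitfE expi_neq0. Qed.

Lemma omegaz_neq0 k (i : int) : omega k ^ i != 0.
Proof. exact/expfz_neq0/expi_neq0. Qed.

Lemma sigmazE (i : int) p k : sigmaz i p k = omega k ^ i * p k.
Proof.
case: i => n /=.
  elim: n => [|n IH]; first by rewrite expr0z mul1r.
  by rewrite iterS sigmaE IH mulrA -!exprnP exprS.
have sigma_inv_iter m : iter m (@sigma_inv R) p k = (omega k)^-1 ^ m * p k.
  elim: m => [|m IH]; first by rewrite expr0z mul1r.
  by rewrite iterS sigma_invE IH /omega expiN invrK mulrA -!exprnP exprS.
by rewrite NegzE -exprz_inv; exact: (sigma_inv_iter n.+1).
Qed.

Lemma sigmaz_comp (i j : int) p : sigmaz i (sigmaz j p) = sigmaz (i + j) p.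
Proof. by apply/fsfunP => k; rewrite !sigmazE mulrA -exprzDr // omega_unit. Qed.

Lemma galois_orbitP p q :
  galois_orbit p = galois_orbit q <-> exists m, q = sigmaz m p.
Proof.
split=> [orb_eq | [m ->]].
  have [m _ <-] : galois_orbit p q by rewrite orb_eq; exists 0.
  by exists m.
apply/seteqP; split => x [i _ <-].
  by exists (i - m) => //; rewrite sigmaz_comp subrK.
by exists (i + m) => //; rewrite sigmaz_comp.
Qed.

Lemma expfactorP p : is_expfactor p <-> forall k, p k != 0 -> 0 < k.
Proof.
split=> [p_ef k pk | p_pos k]; first by apply: p_ef; rewrite mem_finsupp.
by rewrite mem_finsupp; apply: p_pos.
Qed.

Lemma expfactor_sub p q : is_expfactor p -> is_expfactor q -> is_expfactor (subf p q).
Proof.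
move=> /expfactorP p_pos /expfactorP q_pos; apply/expfactorP => k; rewrite subfE.
have [/p_pos//|/negbNE/eqP->] := boolP (p k != 0).
by rewrite sub0r oppr_eq0; apply: q_pos.
Qed.

Lemma expfactor_sigmaz (i : int) p : is_expfactor p -> is_expfactor (sigmaz i p).
Proof.
move=> /expfactorP p_pos; apply/expfactorP => k.
by rewrite sigmazE mulf_eq0 negb_or => /andP[_ /p_pos].
Qed.

Lemma slope_ge0 p : 0 <= slope p.
Proof. exact: bigmax_ge_id. Qed.

Lemma slope_ub p k : p k != 0 -> k <= slope p.
Proof. by rewrite -mem_finsupp => kp; apply: le_bigmax_seq. Qed.

Lemma slope_vanish_above p k : slope p < k -> p k = 0.
Proof. by move=> lt_sk; apply/eqP; apply: contraTT lt_sk => /slope_ub; rewrite -leNgt. Qed.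

Lemma slope_coef p : slope p != 0 -> p (slope p) != 0.
Proof.
have : (slope p == 0) || (slope p \in finsupp p).
  rewrite /slope big_seq; apply: (big_ind (fun x => (x == 0) || (x \in finsupp p))).
  - by rewrite eqxx.
  - by move=> x y x_ok y_ok; rewrite maxEle; case: ifP.
  - by move=> k ->; rewrite orbT.
by case/orP=> [/eqP->|]; rewrite ?eqxx // mem_finsupp.
Qed.

Lemma slope_eq0 p : (forall k, p k = 0) -> slope p = 0.
Proof. by move=> p0; apply/eqP; apply: contraT => /slope_coef; rewrite p0 eqxx. Qed.

Lemma slope0_vanish p : is_expfactor p -> slope p = 0 -> forall k, p k = 0.
Proof.
move=> /expfactorP p_pos s0 k; apply/eqP; apply: contraT => pk.
by have := slope_ub pk; rewrite s0 leNgt p_pos.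
Qed.

Lemma slopeE p s : is_expfactor p -> p s != 0 -> (forall k, s < k -> p k = 0) -> slope p = s.
Proof.
move=> /expfactorP p_pos ps above; apply/eqP; rewrite eq_le slope_ub // andbT.
have [->|s_neq0] := eqVneq (slope p) 0; first exact/ltW/p_pos.
by rewrite leNgt; apply/negP => /above/eqP; apply/negP/slope_coef.
Qed.

Lemma slope_support p p' : (forall k, (p k == 0) = (p' k == 0)) -> slope p = slope p'.
Proof.
move=> supp; rewrite /slope.
by have -> : finsupp p = finsupp p' by apply/fsetP => k; rewrite !mem_finsupp supp.
Qed.

Definition truncates K q Q := forall k, Q k = if K <= k then q k else 0.

Lemma truncates_expfactor K q Q : is_expfactor q -> truncates K q Q -> is_expfactor Q.
Proof.
move=> /expfactorP q_pos QE; apply/expfactorP => k.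
by rewrite QE; case: ifP => _; [exact: q_pos | rewrite eqxx].
Qed.

Lemma truncation_remE K q Q k : truncates K q Q -> subf q Q k = if K <= k then 0 else q k.
Proof. by move=> QE; rewrite subfE QE; case: ifP => _; rewrite ?subrr ?subr0. Qed.

Lemma slope_rem_lt K q Q : 0 < K -> truncates K q Q -> slope (subf q Q) < K.
Proof.
move=> K_gt0 QE; have [->//|s_neq0] := eqVneq (slope (subf q Q)) 0.
by have := slope_coef s_neq0; rewrite (truncation_remE _ QE); case: leP; rewrite ?eqxx.
Qed.

Lemma slope_truncation K p P :
  is_expfactor p -> truncates K p P -> slope P != 0 -> slope p = slope P.
Proof.
move=> p_ef PE P_neq0; have Ps := slope_coef P_neq0.
have le_Ks : K <= slope P by move: Ps; rewrite PE; case: ifP => //; rewrite eqxx.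
apply: slopeE => //; first by move: Ps; rewrite PE le_Ks.
by move=> k lt_sk; have := slope_vanish_above lt_sk; rewrite PE (le_trans le_Ks (ltW lt_sk)).
Qed.

Lemma head_sortP (s : seq rat) :
  if ohead (sort <=%R s) is Some k then k \in s /\ forall x, x \in s -> k <= x
  else s = [::].
Proof.
case E: (sort <=%R s) => [|y t] /=.
  by apply/eqP; rewrite -size_eq0 -(size_sort <=%R) E.
have sorted_s := sort_sorted (@le_total _ rat) s; rewrite E /= in sorted_s.
have y_min := order_path_min (@le_trans _ rat) sorted_s.
split; first by rewrite -(mem_sort <=%R) E inE eqxx.
move=> x; rewrite -(mem_sort <=%R) E inE => /predU1P[->|xt]; first exact: lexx.
exact: (allP y_min).
Qed.

Lemma common_part_truncation q qh : is_expfactor q -> is_expfactor qh ->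
  exists2 K, 0 < K &
    [/\ truncates K q (qc q qh), truncates K qh (qhc q qh),
        galois_orbit (qc q qh) = galois_orbit (qhc q qh) &
        forall s, q s != 0 -> s < K -> galois_orbit (tau s q) <> galois_orbit (tau s qh)].
Proof.
move=> /expfactorP q_pos _.
set S := [seq k <- finsupp q | `[< galois_orbit (tau k q) = galois_orbit (tau k qh) >]].
have in_S s : q s != 0 -> galois_orbit (tau s q) = galois_orbit (tau s qh) -> s \in S.
  by move=> qs orb; rewrite mem_filter mem_finsupp qs andbT; apply/asboolP.
rewrite /qc /qhc; have := head_sortP S; rewrite -/(common_k q qh).
case: (common_k q qh) => [K [K_in K_min] | S_nil].
  move: K_in; rewrite mem_filter mem_finsupp => /andP[/asboolP orbK qK].
  exists K; first exact: q_pos.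
  split=> // [k | k | s qs lt_sK /(in_S s qs)/K_min]; rewrite ?tauE //.
  by rewrite leNgt lt_sK.
have slope_q_ge0 := slope_ge0 q; have slope_qh_ge0 := slope_ge0 qh.
exists (1 + slope q + slope qh); first lra.
split=> // [k | k | s qs _ /(in_S s qs)]; rewrite ?S_nil // zerofE;
  by case: ifP => // le_k; apply/esym/slope_vanish_above; move: le_k; lra.
Qed.

Lemma orbit_tau_eq s q qh (i j : int) :
  (forall k, s <= k -> sigmaz i q k = sigmaz j qh k) ->
  galois_orbit (tau s q) = galois_orbit (tau s qh).
Proof.
move=> agree; apply/galois_orbitP; exists (i - j); apply/fsfunP => k.
rewrite sigmazE !tauE; case: ifP => [le_sk|_]; last by rewrite mulr0.
apply: (mulfI (omegaz_neq0 k j)); rewrite mulrA -exprzDr ?omega_unit // addrC subrK.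
by have := agree k le_sk; rewrite !sigmazE => ->.
Qed.

Lemma slope_sub_top r rh (i j : int) : is_expfactor r -> is_expfactor rh ->
  let s := Num.max (slope r) (slope rh) in
  (s != 0 -> subf (sigmaz i r) (sigmaz j rh) s != 0) ->
  slope (subf (sigmaz i r) (sigmaz j rh)) = s.
Proof.
move=> r_ef rh_ef s no_cancel.
have E_ef : is_expfactor (subf (sigmaz i r) (sigmaz j rh)).
  by apply: expfactor_sub; apply: expfactor_sigmaz.
have E_above k : s < k -> subf (sigmaz i r) (sigmaz j rh) k = 0.
  move=> lt_sk; rewrite subfE !sigmazE !slope_vanish_above ?mulr0 ?subr0 //;
    by apply: le_lt_trans lt_sk; rewrite le_max lexx ?orbT.
have [s0|s_neq0] := eqVneq s 0; last exact: slopeE (no_cancel s_neq0) E_above.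
rewrite s0; apply: slope_eq0 => k; have [k_gt0|k_le0] := ltP 0 k.
  by apply: E_above; rewrite s0.
by apply/eqP; apply: contraTT k_le0 => /((expfactorP _).1 E_ef); rewrite -ltNge.
Qed.

Section Dichotomy.
Variables (K : rat) (q qh Q Qh : expf R).
Hypotheses (q_ef : is_expfactor q) (qh_ef : is_expfactor qh).
Hypotheses (QE : truncates K q Q) (QhE : truncates K qh Qh).
Hypothesis K_min :
  forall s, q s != 0 -> s < K -> galois_orbit (tau s q) <> galois_orbit (tau s qh).

(* When sigma^i q and sigma^j qh agree from K on, the remainders q - Q and
   qh - Qh cannot cancel at their top exponent, by minimality of K. *)
Lemma remainders_no_cancel (i j : int) :
  (forall k, K <= k -> sigmaz i q k = sigmaz j qh k) ->
  let s := Num.max (slope (subf q Q)) (slope (subf qh Qh)) in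
  s != 0 -> subf (sigmaz i (subf q Q)) (sigmaz j (subf qh Qh)) s != 0.
Proof.
move=> agree_high s s_neq0; set r := subf q Q; set rh := subf qh Qh.
have rE k : r k = if K <= k then 0 else q k by apply: truncation_remE.
have rhE k : rh k = if K <= k then 0 else qh k by apply: truncation_remE.
apply/negP; rewrite subfE !sigmazE subr_eq0 => /eqP cancel.
have top_ne0 : r s != 0 \/ rh s != 0.
  by move: s_neq0; rewrite /s maxEle; case: ifP => _ /slope_coef; [right | left].
have r_top : r s != 0.
  case: top_ne0 => // rh_top; apply/negP => /eqP rs0.
  move: cancel; rewrite rs0 mulr0 => /esym/eqP.
  by rewrite mulf_eq0 (negPf (omegaz_neq0 _ _)) (negPf rh_top).
have lt_sK : s < K by move: r_top; rewrite rE; case: leP; rewrite ?eqxx.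
have q_top : q s != 0 by move: r_top; rewrite rE leNgt lt_sK.
apply: (K_min q_top lt_sK); apply: (@orbit_tau_eq _ _ _ i j) => k le_sk.
have [/agree_high//|lt_kK] := leP K k.
rewrite !sigmazE.
have -> : q k = r k by rewrite rE leNgt lt_kK.
have -> : qh k = rh k by rewrite rhE leNgt lt_kK.
move: le_sk; rewrite le_eqVlt => /predU1P[<-|lt_sk]; first exact: cancel.
by rewrite !slope_vanish_above ?mulr0 //; apply: le_lt_trans lt_sk; rewrite le_max lexx ?orbT.
Qed.

Lemma slope_dichotomy (i j : int) :
  slope (subf (sigmaz i q) (sigmaz j qh)) =
  if slope (subf (sigmaz i Q) (sigmaz j Qh)) == 0
  then Num.max (slope (subf q Q)) (slope (subf qh Qh))
  else slope (subf (sigmaz i Q) (sigmaz j Qh)).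
Proof.
have D_ef : is_expfactor (subf (sigmaz i q) (sigmaz j qh)).
  by apply: expfactor_sub; apply: expfactor_sigmaz.
have A_trunc : truncates K (subf (sigmaz i q) (sigmaz j qh)) (subf (sigmaz i Q) (sigmaz j Qh)).
  by move=> k; rewrite !subfE !sigmazE QE QhE; case: ifP; rewrite ?mulr0 ?subr0.
have [A0|A_neq0] := eqVneq (slope (subf (sigmaz i Q) (sigmaz j Qh))) 0; last first.
  exact: slope_truncation A_trunc A_neq0.
have agree_high k : K <= k -> sigmaz i q k = sigmaz j qh k.
  move=> le_Kk; apply/eqP; rewrite -subr_eq0 -subfE.
  by have := slope0_vanish (truncates_expfactor D_ef A_trunc) A0 k; rewrite A_trunc le_Kk => ->.
have -> : subf (sigmaz i q) (sigmaz j qh) = subf (sigmaz i (subf q Q)) (sigmaz j (subf qh Qh)).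
  apply/fsfunP => k; rewrite !subfE !sigmazE !(truncation_remE _ QE, truncation_remE _ QhE).
  case: leP => // le_Kk; rewrite !mulr0 subrr.
  by have := agree_high k le_Kk; rewrite !sigmazE => ->; rewrite subrr.
apply: slope_sub_top; last exact: remainders_no_cancel.
  exact: expfactor_sub (truncates_expfactor q_ef QE).
exact: expfactor_sub (truncates_expfactor qh_ef QhE).
Qed.

End Dichotomy.

Lemma slope_common_parts q qh (i j : int) : is_expfactor q -> is_expfactor qh ->
  slope (subf (sigmaz i q) (sigmaz j qh)) =
  if slope (subf (sigmaz i (qc q qh)) (sigmaz j (qhc q qh))) == 0 then fission q qh
  else slope (subf (sigmaz i (qc q qh)) (sigmaz j (qhc q qh))).
Proof.
move=> q_ef qh_ef; have [K _ [QE QhE _ K_min]] := common_part_truncation q_ef qh_ef.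
exact: slope_dichotomy.
Qed.

Lemma fission_lt q qh : is_expfactor q -> is_expfactor qh ->
  exists2 K, truncates K q (qc q qh) & fission q qh < K.
Proof.
move=> q_ef qh_ef; have [K K_gt0 [QE QhE _ _]] := common_part_truncation q_ef qh_ef.
by exists K; rewrite // gt_max !(slope_rem_lt K_gt0).
Qed.

(* For factors in distinct orbits the fission exponent is nonzero: otherwise
   q and qh would coincide with their (conjugate) common parts. *)
Lemma fission_neq0 q qh : is_expfactor q -> is_expfactor qh ->
  galois_orbit q <> galois_orbit qh -> fission q qh != 0.
Proof.
move=> q_ef qh_ef q_qh_dist; apply/eqP => f0.
have [K _ [QE QhE orbQ _]] := common_part_truncation q_ef qh_ef.
have rem_eq0 p P : is_expfactor p -> truncates K p P -> slope (subf p P) = 0 -> p = P.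
  move=> p_ef PE s0; apply/fsfunP => k; apply/eqP; rewrite -subr_eq0 -subfE.
  by rewrite (slope0_vanish (expfactor_sub p_ef (truncates_expfactor p_ef PE)) s0).
have s_q : slope (subf q (qc q qh)) = 0.
  by apply/le_anti; rewrite slope_ge0 andbT -f0 le_max lexx.
have s_qh : slope (subf qh (qhc q qh)) = 0.
  by apply/le_anti; rewrite slope_ge0 andbT -f0 le_max lexx orbT.
apply: q_qh_dist; move: orbQ.
by rewrite -(rem_eq0 _ _ q_ef QE s_q) -(rem_eq0 _ _ qh_ef QhE s_qh).
Qed.

Definition level P (n : int) : rat := slope (subf P (sigmaz n P)).

Lemma level_coef P (n : int) k : subf P (sigmaz n P) k = (1 - omega k ^ n) * P k.
Proof. by rewrite subfE sigmazE mulrBl mul1r. Qed.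

Lemma level0 P : level P 0 = 0.
Proof. by apply: slope_eq0 => k; rewrite subfE subrr. Qed.

Lemma slope_sigmaz_sub P (a b : int) :
  slope (subf (sigmaz a P) (sigmaz b P)) = level P (b - a).
Proof.
apply: slope_support => k; rewrite level_coef subfE !sigmazE.
have -> : omega k ^ b = omega k ^ a * omega k ^ (b - a).
  by rewrite -exprzDr ?omega_unit // addrC subrK.
by rewrite -mulrA -mulrBr mulf_eq0 (negPf (omegaz_neq0 _ _)) mulrBl mul1r.
Qed.

Lemma level_periodic P (r : nat) (n t : int) :
  (forall k, P k != 0 -> omega k ^+ r = 1) -> level P (n + t * r%:Z) = level P n.
Proof.
move=> omega_r; apply: slope_support => k; rewrite !level_coef.
have [->|Pk] := eqVneq (P k) 0; first by rewrite !mulr0.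
by rewrite exprzDr ?omega_unit // [t * _]mulrC -exprz_exp -exprnP omega_r // exp1rz mulr1.
Qed.

Lemma level_ge_trunc K q P (n : int) : truncates K q P -> level P n != 0 -> K <= level P n.
Proof.
move=> PE /slope_coef; rewrite level_coef mulf_eq0 negb_or => /andP[_].
by rewrite PE; case: ifP => //; rewrite eqxx.
Qed.

(* The level function is monotone in the set of levels: a nonzero value
   l = level P n satisfies omega l ^ n <> 1, and l is an exponent of P' when
   it is a level of P', so P' - sigma^n P' has a nonzero coefficient at l. *)
Lemma level_le P P' : Levels P `<=` Levels P' -> forall n, level P n <= level P' n.
Proof.
move=> sub_levels n; have [->|l_neq0] := eqVneq (level P n) 0; first exact: slope_ge0.
have := slope_coef l_neq0; rewrite level_coef mulf_eq0 negb_or => /andP[omega_n Pl].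
have [t [lt l_ne0]] : Levels P' (level P n) by apply: sub_levels; exists n.
have P'l : P' (level P n) != 0.
  move: l_ne0; rewrite lt => /slope_coef; rewrite -lt level_coef mulf_eq0 negb_or.
  by case/andP.
by apply: slope_ub; rewrite level_coef mulf_neq0.
Qed.

Lemma level_determined P P' : Levels P = Levels P' -> forall n, level P n = level P' n.
Proof. by move=> eq_levels n; apply/le_anti; rewrite !level_le // eq_levels. Qed.

Lemma ramification_gt0 q : (0 < ramification q)%N.
Proof. by rewrite /ramification; case: pselect => // h; case: ex_minnP => d /andP[]. Qed.

Lemma common_denominator (s : seq rat) :
  exists2 d : nat, (0 < d)%N & forall k, k \in s -> k * d%:R \is a Num.int.
Proof.
elim: s => [|x s [d d_gt0 d_den]]; first by exists 1%N.
have denE : ((`|denq x|)%N%:R : rat) = (denq x)%:~R.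
  by rewrite natr_absz ger0_norm // ltW // denq_gt0.
exists (d * `|denq x|)%N; first by rewrite muln_gt0 d_gt0 absz_gt0 denq_neq0.
move=> k /predU1P[->|k_in]; last by rewrite natrM mulrA rpredM // ?d_den // rpred_nat.
by rewrite natrM denE mulrC -mulrA [_ * x]mulrC -numqE rpredM // ?intr_int // rpred_nat.
Qed.

Lemma omega_ramification q k :
  is_expfactor q -> q k != 0 -> omega k ^+ ramification q = 1.
Proof.
move=> q_ef qk.
have ram_ok : exists d, ramification_ok q d.
  have [d d_gt0 d_den] := common_denominator (finsupp q).
  exists d; rewrite /ramification_ok d_gt0; apply/allP => k' k'_in.
  by rewrite d_den // andbT; apply: q_ef.
rewrite /ramification; case: pselect => // h; case: ex_minnP => d /andP[_ d_ok] _.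
have k_in : k \in finsupp q by rewrite mem_finsupp.
have /andP[_ /intrP[N kN]] := allP d_ok k k_in.
have kdN : ratr k * d%:R = N%:~R :> R by rewrite -ratr_nat -rmorphM /= kN ratr_int.
rewrite /omega expiMn.
have -> : - (2 * pi * ratr k) *+ d = ((pi : R) *+ 2) * (- N)%:~R.
  by rewrite -mulr_natr mulrNz -kdN; ring.
exact: expi_2pi_int.
Qed.

Lemma fission_not_level q qh : is_expfactor q -> is_expfactor qh ->
  ~ Levels (qc q qh) (fission q qh).
Proof.
move=> q_ef qh_ef [n [fE f_neq0]]; have [K QE f_lt] := fission_lt q_ef qh_ef.
by have := level_ge_trunc (n := n) QE; rewrite /level -fE leNgt f_lt => /(_ f_neq0).
Qed.

Lemma slope_set_between_orbits q qh :
  is_expfactor q -> is_expfactor qh -> galois_orbit q <> galois_orbit qh ->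
  [set s : rat | exists i j : nat, (i < ramification q)%N /\ (j < ramification qh)%N /\
     s = slope (subf (sigmaz (Posz i) q) (sigmaz (Posz j) qh)) /\ s != 0]
  = Levels (qc q qh) `|` [set fission q qh].
Proof.
move=> q_ef qh_ef q_qh_dist.
have [K _ [QE _ orbQ _]] := common_part_truncation q_ef qh_ef.
have [m QhE] := (galois_orbitP _ _).1 orbQ.
set Q := qc q qh in QE QhE *; set f := fission q qh.
have slopeE (i j : int) : slope (subf (sigmaz i q) (sigmaz j qh)) =
    if level Q (j + m - i) == 0 then f else level Q (j + m - i).
  by rewrite slope_common_parts // QhE sigmaz_comp slope_sigmaz_sub.
have Q_period (n t : int) : level Q (n + t * (ramification q)%:Z) = level Q n.
  apply: level_periodic => k; rewrite QE; case: ifP; rewrite ?eqxx // => _.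
  exact: omega_ramification.
have ram_q := ramification_gt0 q; have ram_qh := ramification_gt0 qh.
apply/seteqP; split.
  move=> _ [i [j [_ [_ [-> s_neq0]]]]]; move: s_neq0; rewrite slopeE.
  by case: ifP => [_ _|/negbT l_neq0 _]; [right | left; exists (Posz j + m - Posz i)].
move=> _ [[n [-> l_neq0]] | ->].
  have [i lt_i [t mi]] := shift_representative m n ram_q.
  by exists i, 0%N; rewrite lt_i ram_qh (slopeE i 0) add0r mi Q_period (negPf l_neq0).
have [i lt_i [t mi]] := shift_representative m 0 ram_q.
exists i, 0%N; rewrite lt_i ram_qh (slopeE i 0) add0r mi Q_period level0 eqxx.
by rewrite (fission_neq0 q_ef qh_ef q_qh_dist).
Qed.

Lemma slopes_determined q qh q' qh' :
  is_expfactor q -> is_expfactor qh -> is_expfactor q' -> is_expfactor qh' ->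
  compatible q qh -> compatible q' qh' ->
  Levels (qc q' qh') = Levels (qc q qh) -> fission q' qh' = fission q qh ->
  forall i j : int,
    slope (subf (sigmaz i q') (sigmaz j qh')) = slope (subf (sigmaz i q) (sigmaz j qh)).
Proof.
move=> q_ef qh_ef q'_ef qh'_ef compat compat' eq_levels eq_fission i j.
rewrite (slope_common_parts _ _ q_ef qh_ef) (slope_common_parts _ _ q'_ef qh'_ef).
rewrite -compat -compat' !slope_sigmaz_sub eq_fission.
by rewrite (level_determined eq_levels).
Qed.

End SlopesBetweenOrbits.

Unset Implicit Arguments.

Theorem mainTheorem4 (R : realType) (q qh : expf R) :
  is_expfactor q -> is_expfactor qh -> galois_orbit q <> galois_orbit qh ->
  ([set s : rat | exists i j : nat, (i < ramification q)%N /\ (j < ramification qh)%N /\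
       s = slope (subf (sigmaz (Posz i) q) (sigmaz (Posz j) qh)) /\ s != 0]
     = Levels (qc q qh) `|` [set fission q qh]
   /\ ~ Levels (qc q qh) (fission q qh))
  /\
  (compatible q qh ->
   forall q' qh' : expf R,
     is_expfactor q' -> is_expfactor qh' -> galois_orbit q' <> galois_orbit qh' ->
     compatible q' qh' ->
     Levels (qc q' qh') = Levels (qc q qh) ->
     fission q' qh' = fission q qh ->
     forall i j : int,
       slope (subf (sigmaz i q') (sigmaz j qh')) = slope (subf (sigmaz i q) (sigmaz j qh))).
Proof.
move=> q_ef qh_ef q_qh_dist; split.
  split; first exact: slope_set_between_orbits.
  exact: fission_not_level.
move=> compat q' qh' q'_ef qh'_ef _ compat'.
exact: slopes_determined.
Qed.
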